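(* Let $p$ be a prime and $n\ge 1$. Let $f_0,f_1,\ldots,f_{p-1}$ be near-bent functions from $\mathbb{F}_{p^n}$ to $\mathbb{F}_p$ such that $\mathrm{supp}(\widehat{f_i})\cap \mathrm{supp}(\widehat{f_j})=\emptyset$ for all $0\le i\ne j\le p-1$. Then the function $F:\mathbb{F}_{p^n}\times\mathbb{F}_p\to\mathbb{F}_p$ defined by \[ F(x,y)=(p-1)\sum_{k=0}^{p-1}\Big(\prod_{j\in\mathbb{F}_p,\, j\ne k}(y-j)\Big)f_k(x) \] is bent (as a function on the $(n+1)$-dimensional $\mathbb{F}_p$-space $\mathbb{F}_{p^n}\times\mathbb{F}_p$, with inner product $\langle (a,b),(x,y)\rangle=\mathrm{Tr}_n(ax)+by$).
   Context: $\epsilon_p=e^{2\pi i/p}$ and $\mathrm{Tr}_n$ is the absolute trace from $\mathbb{F}_{p^n}$ to $\mathbb{F}_p$. For $f:\mathbb{F}_{p^n}\to\mathbb{F}_p$ the Fourier transform is $\widehat{f}(b)=\sum_{x\in\mathbb{F}_{p^n}}\epsilon_p^{f(x)-\mathrm{Tr}_n(bx)}$; more generally for a function $g$ on an $m$-dimensional $\mathbb{F}_p$-space $V$ with inner product $\langle\cdot,\cdot\rangle$, $\widehat{g}(b)=\sum_{x\in V}\epsilon_p^{g(x)-\langle b,x\rangle}$. $g$ is bent if $|\widehat{g}(b)|^2=p^m$ for all $b$. A function $f:\mathbb{F}_{p^n}\to\mathbb{F}_p$ is near-bent if $|\widehat{f}(b)|^2\in\{0,p^{n+1}\}$ for all $b\in\mathbb{F}_{p^n}$.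 $\mathrm{supp}(\widehat f)=\{b\in\mathbb{F}_{p^n}:\widehat f(b)\neq 0\}$. *)

From HB Require Import structures.
From mathcomp Require Import all_boot all_order all_algebra all_field.
Unset Printing Implicit Defensive.
Import Order.TTheory GRing.Theory Num.Theory.
Local Open Scope ring_scope.

(* epsilon_p = e^{2 pi i / p}: p.-root (-1) is e^{i pi / p} (minimal argument). *)
Definition eps (p : nat) : algC := (p.-root (-1)) ^+ 2.

Definition traceK {K : finFieldType} (p n : nat) (x : K) : K :=
  \sum_(i < n) x ^+ (p ^ i)%N.

Definition Tr {K : finFieldType} (p n : nat) (x : K) : 'F_p :=
  odflt 0 [pick k : 'F_p | ((val k)%:R : K) == traceK p n x].

Definition epow {p : nat} (z : 'F_p) : algC := eps p ^+ (val z).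

Definition fourier {K : finFieldType} (p n : nat) (f : K -> 'F_p) (b : K) : algC :=
  \sum_(x : K) epow (f x - Tr p n (b * x)).

Definition fourier2 {K : finFieldType} (p n : nat) (g : K -> 'F_p -> 'F_p)
    (a : K) (b : 'F_p) : algC :=
  \sum_(x : K) \sum_(y : 'F_p) epow (g x y - (Tr p n (a * x) + b * y)).

Definition near_bent {K : finFieldType} (p n : nat) (f : K -> 'F_p) : Prop :=
  forall b : K, `|fourier p n f b| ^+ 2 = 0 \/
                `|fourier p n f b| ^+ 2 = (p ^ n.+1)%:R.

Definition bent2 {K : finFieldType} (p n : nat) (g : K -> 'F_p -> 'F_p) : Prop :=
  forall (a : K) (b : 'F_p), `|fourier2 p n g a b| ^+ 2 = (p ^ n.+1)%:R.

Definition supp_fourier {K : finFieldType} (p n : nat) (f : K -> 'F_p) : {set K} :=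
  [set b | fourier p n f b != 0].

Definition Fglue {K : finFieldType} {p : nat} (f : 'F_p -> K -> 'F_p)
    (x : K) (y : 'F_p) : 'F_p :=
  (p.-1)%:R * \sum_(k : 'F_p) (\prod_(j : 'F_p | j != k) (y - j)) * f k x.

From HB Require Import structures.
From mathcomp Require Import all_boot all_order all_algebra all_field.
Import Order.TTheory GRing.Theory Num.Theory.
Local Open Scope ring_scope.
Set Implicit Arguments.
Unset Strict Implicit.

(* By Wilson's theorem each factor (p-1) prod_(j != k) (y - j) is the indicator of
   [y = k], so F(x, y) = f_y(x) and the Fourier coefficient of F at (a, b) is
   sum_y eps^(-b y) \hat f_y(a).  By Parseval every near-bent f_y has exactly
   p^(n-1) nonzero Fourier coefficients, so the p pairwise disjoint supports cover
   F_(p^n): for each a exactly one \hat f_y(a) is nonzero, and it has squared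
   modulus p^(n+1). *)

Lemma exists_nonroot (F : finFieldType) (q : {poly F}) :
  q != 0 -> (size q <= #|F|)%N -> exists x, ~~ root q x.
Proof.
move=> q_neq0 size_q; apply/existsP; apply: contraTT size_q => /existsPn all_roots.
rewrite -ltnNge cardE; apply: max_poly_roots q_neq0 _ (enum_uniq F).
by apply/allP => x _; apply/negPn/all_roots.
Qed.

Lemma sum_le_const_eq (R : numDomainType) (I : finType) (F : I -> R) (c : R) :
  (forall i, F i <= c) -> \sum_i F i = #|I|%:R * c -> forall i, F i = c.
Proof.
move=> F_le sum_F i; apply/eqP; rewrite eq_sym -subr_eq0; apply/eqP.
apply: (@psumr_eq0P _ _ xpredT (fun i => c - F i)) => // [j _|].
  by rewrite subr_ge0.
by rewrite sumrB sumr_const sum_F mulr_natl subrr.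
Qed.

Lemma sqr_normC_sum_single (I : finType) (c w : I -> algC) :
  (forall i, `|c i| = 1) -> (forall i j, w i != 0 -> w j != 0 -> i = j) ->
  `|\sum_i c i * w i| ^+ 2 = \sum_i `|w i| ^+ 2.
Proof.
move=> c_unit w_single; have [i0 w_i0 | w_eq0] := pickP (fun i => w i != 0); last first.
  have w0 i : w i = 0 by apply/eqP/negbNE/negbT/w_eq0.
  rewrite big1 => [|i _]; last by rewrite w0 mulr0.
  by rewrite big1 => [|i _]; rewrite ?w0 normr0 expr0n.
have w0 i : i != i0 -> w i = 0.
  by move=> i_neq; apply/eqP; apply: contraNT i_neq => w_i; rewrite (w_single _ _ w_i w_i0).
rewrite (bigD1 i0) //= big1 => [|i /w0 ->]; last by rewrite mulr0.
rewrite (bigD1 i0) //= big1 => [|i /w0 ->]; last by rewrite normr0 expr0n.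
by rewrite !addr0 normrM c_unit mul1r.
Qed.

Lemma eps_expn p : (0 < p)%N -> eps p ^+ p = 1.
Proof. by move=> p_gt0; rewrite /eps exprAC rootCK // sqrrN expr1n. Qed.

Lemma eps_neq1 p : (1 < p)%N -> eps p != 1.
Proof.
move=> p_gt1; rewrite /eps sqrf_eq1; apply/norP; split.
  apply/eqP => r1; have := rootCK (ltnW p_gt1) (-1 : algC).
  by rewrite r1 expr1n => /eqP; rewrite -addr_eq0 (@pnatr_eq0 _ 2).
by apply: contraFneq (rootC_lt0 (-1 : algC) p_gt1) => ->; rewrite ltrN10.
Qed.

Lemma norm_eps p : (0 < p)%N -> `|eps p| = 1.
Proof.
move=> p_gt0; apply/eqP; rewrite -(pexpr_eq1 p_gt0) // -normrX eps_expn //.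
by rewrite normr1.
Qed.

Section Epow.
Variable p : nat.
Hypothesis p_pr : prime p.

Lemma Fp_val_lt (k : 'F_p) : (val k < p)%N.
Proof. by case: k => m /=; rewrite Fp_cast. Qed.

Lemma Fp_dvd_val (u : 'F_p) : (p %| val u)%N = (u == 0).
Proof.
apply/idP/eqP => [u_dvd|->]; last exact: dvdn0.
apply: contraTeq u_dvd => u_neq0; rewrite gtnNdvd ?Fp_val_lt // lt0n.
by apply: contra u_neq0 => /eqP u0; apply/eqP/val_inj.
Qed.

Lemma Fp_valD (u v : 'F_p) : val (u + v) = ((val u + val v) %% p)%N.
Proof. by rewrite /=; congr (_ %% _)%N; apply: Fp_cast. Qed.

Lemma epowD (u v : 'F_p) : epow (u + v) = epow u * epow v.
Proof. by rewrite /epow Fp_valD expr_mod ?exprD // eps_expn ?prime_gt0. Qed.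

Lemma epow0 : epow (0 : 'F_p) = 1.
Proof. by rewrite /epow expr0. Qed.

Lemma epowN (u : 'F_p) : epow (- u) * epow u = 1.
Proof. by rewrite -epowD addNr epow0. Qed.

Lemma norm_epow (u : 'F_p) : `|epow u| = 1.
Proof. by rewrite /epow normrX norm_eps ?prime_gt0 // expr1n. Qed.

Lemma conj_epow (u : 'F_p) : (epow u)^* = epow (- u).
Proof. by rewrite -[LHS]mulr1 -(epowN u) mulrCA -normCKC norm_epow expr1n mulr1. Qed.

(* [eps p] has order exactly [p], as [p] is prime and [eps p <> 1]. *)
Lemma epow_eq1 (u : 'F_p) : (epow u == 1) = (u == 0).
Proof.
have [m m_prim m_dvd] := prim_order_exists (prime_gt0 p_pr) (eps_expn (prime_gt0 p_pr)).
have m_p : m = p.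
  have /primeP[_ /(_ m m_dvd)/orP[/eqP m1|/eqP //]] := p_pr.
  have := prim_expr_order m_prim; rewrite m1 expr1 => /eqP.
  by rewrite (negPf (eps_neq1 (prime_gt1 p_pr))).
by rewrite /epow -(prim_order_dvd m_prim) m_p Fp_dvd_val.
Qed.
End Epow.

Definition Fp_embed {p : nat} {K : nzRingType} (k : 'F_p) : K := (val k)%:R.

Section FiniteField.
Variables (p n : nat) (K : finFieldType).
Hypotheses (p_pr : prime p) (n_gt0 : (0 < n)%N) (cardK : #|K| = (p ^ n)%N).

Let pcharK : p \in [pchar K] := card_finPcharP cardK p_pr.

Lemma Fp_embedD (u v : 'F_p) : Fp_embed (u + v) = Fp_embed u + Fp_embed v :> K.
Proof. by rewrite /Fp_embed Fp_valD // GRing.natr_mod_pchar // natrD. Qed.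

Lemma Fp_embed_inj : injective (@Fp_embed p K).
Proof.
move=> u v e; apply/eqP; rewrite -subr_eq0 -(Fp_dvd_val p_pr) (dvdn_pcharf pcharK).
have := Fp_embedD (u - v) v; rewrite subrK e -{1}[Fp_embed v]add0r => /addIr.
by rewrite /Fp_embed => <-.
Qed.

Lemma Fp_embed_expp (k : 'F_p) : Fp_embed k ^+ p = Fp_embed k :> K.
Proof. exact: pFrobenius_aut_nat pcharK (val k). Qed.

(* The [p] values [Fp_embed k] exhaust the roots of ['X^p - 'X]. *)
Lemma Fp_embed_onto (z : K) : z ^+ p = z -> exists k : 'F_p, Fp_embed k = z.
Proof.
move=> zp; have [k /eqP <-|not_img] := pickP (fun k : 'F_p => Fp_embed k == z).
  by exists k.
pose r : {poly K} := 'X^p - 'X.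
have size_r : size r = p.+1.
  by rewrite /r size_polyDl ?size_polyXn // size_polyN size_polyX ltnS prime_gt1.
have r_neq0 : r != 0 by rewrite -size_poly_eq0 size_r.
suff: (p.+1 < p.+1)%N by rewrite ltnn.
rewrite -{1}(card_Fp p_pr) cardE -(size_map (@Fp_embed p K)) -size_r.
apply: (max_poly_roots (rs := z :: map Fp_embed (enum 'F_p)) r_neq0); last first.
  rewrite /= map_inj_uniq ?enum_uniq ?andbT; last exact: Fp_embed_inj.
  by apply/mapP => -[k _ e]; have := not_img k; rewrite -e eqxx.
rewrite /= /root /r !hornerE zp subrr eqxx /=.
by apply/allP => _ /mapP [k _ ->]; rewrite /root !hornerE Fp_embed_expp subrr.
Qed.

Lemma traceK_expp (x : K) : traceK p n x ^+ p = traceK p n x.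
Proof.
have frob : (x ^+ (p ^ n) = x) by rewrite -cardK expf_card.
rewrite /traceK -(pFrobenius_autE pcharK) rmorph_sum /=.
under eq_bigr => i _ do rewrite pFrobenius_autE -exprM -expnSr.
move: frob; case: n n_gt0 => // m _ frob.
rewrite big_ord_recr /= [RHS]big_ord_recl /= expn0 expr1 frob addrC.
by congr (_ + _); apply: eq_bigr => i _; rewrite /bump add1n.
Qed.

Lemma traceKD (x y : K) : traceK p n (x + y) = traceK p n x + traceK p n y.
Proof.
rewrite /traceK -big_split /=; apply: eq_bigr => i _.
by rewrite exprDn_pchar // pnatX (pnatE _ p_pr) pcharK.
Qed.

Lemma Fp_embed_Tr (x : K) : Fp_embed (Tr p n x) = traceK p n x.
Proof.
rewrite /Tr; case: pickP => [k /eqP //|not_img].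
have [k tr_k] := Fp_embed_onto (traceK_expp x).
by move: (not_img k); rewrite -tr_k /Fp_embed eqxx.
Qed.

Lemma TrD (x y : K) : Tr p n (x + y) = Tr p n x + Tr p n y.
Proof. by apply: Fp_embed_inj; rewrite Fp_embedD !Fp_embed_Tr traceKD. Qed.

Lemma Tr0 : Tr p n (0 : K) = 0.
Proof. by have := TrD 0 0; rewrite addr0 -{1}[Tr p n 0]addr0 => /addrI <-. Qed.

Lemma TrN (x : K) : Tr p n (- x) = - Tr p n x.
Proof. by apply/eqP; rewrite -addr_eq0 -TrD addNr Tr0. Qed.

Lemma traceK_neq0 : exists x : K, traceK p n x != 0.
Proof.
pose q : {poly K} := \sum_(i < n) 'X^(p ^ i).
have p_gt1 := prime_gt1 p_pr.
have q_coef : q`_(p ^ n.-1) = 1.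
  have n1_lt : (n.-1 < n)%N by rewrite ltn_predL.
  rewrite /q coef_sum (bigD1 (Ordinal n1_lt)) //= coefXn eqxx big1 ?addr0 //.
  move=> i /eqP i_neq; rewrite coefXn eqn_exp2l //.
  by case: eqP => // e; case: i_neq; apply: val_inj.
have size_q : (size q <= (p ^ n.-1).+1)%N.
  apply: leq_trans (size_sum _ _ _) _; apply/bigmax_leqP => i _.
  by rewrite size_polyXn ltnS leq_pexp2l ?prime_gt0 // -ltnS prednK.
have [x x_nonroot] : exists x, ~~ root q x.
  apply: exists_nonroot.
  - apply/eqP => /(congr1 (fun r : {poly K} => r`_(p ^ n.-1)%N)).
    by rewrite q_coef coef0 => /eqP; rewrite oner_eq0.
  - apply: leq_trans size_q _; rewrite cardK -(prednK n_gt0) expnS /=.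
    by rewrite -{1}[(p ^ n.-1)%N]mul1n ltn_pmul2r ?expn_gt0 ?prime_gt0.
exists x; apply: contra x_nonroot => /eqP tr0.
rewrite /root /q horner_sum; apply/eqP; rewrite -[RHS]tr0.
by apply: eq_bigr => i _; rewrite hornerXn.
Qed.

Lemma Tr_neq0 : exists x : K, Tr p n x != 0.
Proof.
have [x tr_x] := traceK_neq0; exists x.
by apply: contra tr_x => /eqP tr0; rewrite -Fp_embed_Tr tr0.
Qed.

(* For [c != 0] the translation [a |-> a + x0 / c] multiplies the sum by
   [epow (Tr x0) != 1]. *)
Lemma sum_epow_Tr (c : K) :
  \sum_(a : K) epow (Tr p n (a * c)) = if c == 0 then #|K|%:R else 0.
Proof.
have [-> | c_neq0] := eqVneq c 0.
  by under eq_bigr => a _ do rewrite mulr0 Tr0 epow0; rewrite sumr_const cardE.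
have [x0 tr_x0] := Tr_neq0.
set S := \sum_(a : K) _.
have S_invariant : S = S * epow (Tr p n x0).
  rewrite {1}/S (reindex_inj (addIr (x0 / c))) mulr_suml; apply: eq_bigr => a _.
  by rewrite mulrDl divfK // TrD epowD.
have : S * (1 - epow (Tr p n x0)) = 0 by rewrite mulrBr mulr1 -S_invariant subrr.
move/eqP; rewrite mulf_eq0 subr_eq0 [1 == _]eq_sym epow_eq1 //.
by rewrite (negPf tr_x0) orbF => /eqP.
Qed.

Lemma fourier_mul_conj (g : K -> 'F_p) (a x y : K) :
  epow (g x - Tr p n (a * x)) * (epow (g y - Tr p n (a * y)))^* =
  epow (g x - g y) * epow (Tr p n (a * (y - x))).
Proof.
rewrite conj_epow // opprB mulrBr TrD TrN !epowD // -!mulrA; congr (_ * _).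
by rewrite mulrC -mulrA mulrCA.
Qed.

Lemma parseval (g : K -> 'F_p) :
  \sum_(a : K) `|fourier p n g a| ^+ 2 = (#|K| * #|K|)%:R.
Proof.
under eq_bigr => a _ do rewrite normCK /fourier rmorph_sum mulr_suml.
under eq_bigr => a _ do under eq_bigr => x _ do rewrite mulr_sumr.
under eq_bigr => a _ do under eq_bigr => x _ do under eq_bigr => y _ do
  rewrite fourier_mul_conj.
rewrite exchange_big /=; under eq_bigr => x _ do rewrite exchange_big /=.
under eq_bigr => x _ do under eq_bigr => y _ do rewrite -mulr_sumr sum_epow_Tr subr_eq0.
have diag x : \sum_(y : K) epow (g x - g y) * (if y == x then #|K|%:R else 0) = #|K|%:R.
  rewrite (bigD1 x) //= eqxx subrr epow0 mul1r big1 ?addr0 // => y /negPf ->.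
  by rewrite mulr0.
by under eq_bigr => x _ do rewrite diag; rewrite sumr_const natrM mulr_natr.
Qed.

End FiniteField.

Section Wilson.
Variable p : nat.
Hypothesis p_pr : prime p.

Lemma prod_Fp_neq0 : \prod_(j : 'F_p | j != 0) j = -1.
Proof.
set m := (Zp_trunc (pdiv p)).+1.
have fact_pred : (\prod_(i < m) i.+1)%N = (p.-1)`!.
  by rewrite -(congr1 predn (Fp_cast p_pr)) fact_prod big_add1 big_mkord.
rewrite (eq_bigr (fun j : 'F_p => (val j)%:R)) => [|j _]; last by rewrite natr_Zp.
rewrite -natr_prod big_mkcond big_ord_recl /= mul1n.
rewrite (eq_bigr (fun i : 'I_m => i.+1)) // fact_pred.
have := Wilson (prime_gt1 p_pr); rewrite p_pr => /esym.
by rewrite (dvdn_pcharf (pchar_Fp p_pr)) -natr1 addr_eq0 => /eqP.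
Qed.

Lemma prod_Fp_sub_neq (y : 'F_p) : \prod_(j : 'F_p | j != y) (y - j) = -1.
Proof.
have sub_inj : injective (fun j : 'F_p => y - j) by move=> u v /addrI /oppr_inj.
rewrite (reindex_inj sub_inj) /= -prod_Fp_neq0; apply: eq_big => j.
  by rewrite -{2}[y]subr0 (inj_eq sub_inj).
by rewrite opprB addrCA subrr addr0.
Qed.

Lemma natr_Fp_predp : (p.-1)%:R = -1 :> 'F_p.
Proof. by apply/eqP; rewrite -addr_eq0 natr1 prednK ?prime_gt0 // pchar_Fp_0. Qed.

End Wilson.

Lemma Fglue_eval (p : nat) (K : finFieldType) (f : 'F_p -> K -> 'F_p) x y :
  prime p -> Fglue f x y = f y x.
Proof.
move=> p_pr; rewrite /Fglue (bigD1 y) //= prod_Fp_sub_neq // big1 ?addr0.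
  by rewrite natr_Fp_predp // mulN1r mulNr opprK mul1r.
move=> k k_neq; rewrite (bigD1 y) /=; last by rewrite eq_sym.
by rewrite subrr !mul0r.
Qed.

Lemma fourier2_Fglue (p n : nat) (K : finFieldType) (f : 'F_p -> K -> 'F_p) a b :
  prime p ->
  fourier2 p n (Fglue f) a b = \sum_(y : 'F_p) epow (- (b * y)) * fourier p n (f y) a.
Proof.
move=> p_pr; rewrite /fourier2 exchange_big /=; apply: eq_bigr => y _.
rewrite /fourier mulr_sumr; apply: eq_bigr => x _.
by rewrite Fglue_eval // opprD addrA [LHS]epowD // mulrC.
Qed.

Lemma near_bent_sqr_norm (p n : nat) (K : finFieldType) (g : K -> 'F_p) (a : K) :
  near_bent p n g -> fourier p n g a != 0 -> `|fourier p n g a| ^+ 2 = (p ^ n.+1)%:R.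
Proof.
move=> g_nb; case: (g_nb a) => // /eqP; rewrite sqrf_eq0 normr_eq0 => -> //.
Qed.


Section GluedNearBent.
Variables (p n : nat) (K : finFieldType) (f : 'F_p -> K -> 'F_p).
Hypotheses (p_pr : prime p) (n_gt0 : (0 < n)%N) (cardK : #|K| = (p ^ n)%N).
Hypothesis f_near_bent : forall k, near_bent p n (f k).
Hypothesis f_disjoint : forall i j, i != j ->
  supp_fourier p n (f i) :&: supp_fourier p n (f j) = set0.

Lemma fourier_support_unique (a : K) (y z : 'F_p) :
  fourier p n (f y) a != 0 -> fourier p n (f z) a != 0 -> y = z.
Proof.
move=> y_supp z_supp; apply/eqP; apply: contraT => y_neq_z.
have /setP/(_ a) := f_disjoint y_neq_z.
by rewrite !inE y_supp z_supp.
Qed.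

Lemma sum_sqr_fourier_le (a : K) :
  \sum_(y : 'F_p) `|fourier p n (f y) a| ^+ 2 <= (p ^ n.+1)%:R.
Proof.
have [y0 y0_supp | none_supp] := pickP (fun y => fourier p n (f y) a != 0); last first.
  rewrite big1 ?ler0n // => y _.
  by have /negbFE/eqP -> := none_supp y; rewrite normr0 expr0n.
rewrite (bigD1 y0) //= big1 ?addr0 ?near_bent_sqr_norm // => y y_neq.
have /eqP -> : fourier p n (f y) a == 0; last by rewrite normr0 expr0n.
by apply: contraNT y_neq => y_supp; rewrite (fourier_support_unique y_supp y0_supp).
Qed.

(* By Parseval the [p] functions together carry [p * #|K|^2 = #|K| * p^(n+1)], the
   maximum allowed by [sum_sqr_fourier_le]. *)
Lemma sum_sqr_fourier (a : K) :
  \sum_(y : 'F_p) `|fourier p n (f y) a| ^+ 2 = (p ^ n.+1)%:R.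
Proof.
apply: sum_le_const_eq sum_sqr_fourier_le _ a.
rewrite exchange_big /=.
under eq_bigr => y _ do rewrite (parseval p_pr n_gt0 cardK).
by rewrite sumr_const card_Fp // -mulrnA -natrM cardK expnS mulnA mulnAC.
Qed.

End GluedNearBent.

Theorem theorem1 (p n : nat) (K : finFieldType)
  (hp : prime p) (hn : (1 <= n)%N) (hK : #|K| = (p ^ n)%N)
  (f : 'F_p -> K -> 'F_p)
  (hnb : forall k : 'F_p, near_bent p n (f k))
  (hdisj : forall i j : 'F_p, i != j ->
     supp_fourier p n (f i) :&: supp_fourier p n (f j) = set0) :
  bent2 p n (Fglue f).
Proof.
move=> a b; rewrite fourier2_Fglue // sqr_normC_sum_single.
- exact: sum_sqr_fourier.
- by move=> y; rewrite norm_epow.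
- by move=> y z; apply: fourier_support_unique.
Qed.
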